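(* Let $\pi\colon \mathsf{States}\to\mathbb{R}_{\ge 0}$ be a potential function. For every program $C$ of the heap-manipulating probabilistic guarded command language and every $X\in\mathbb{A}_\pi$, $$\mathsf{aert}_\pi[\![C]\!](X) \;=\; \mathsf{ert}[\![C]\!](X+\pi)\;-\;\pi .$$
   Context: States and programs. Fix a finite set $\mathrm{Vars}$ of variables; values are $\mathbb{N}$, locations are $\mathbb{N}_{>0}$. A stack is $s\colon \mathrm{Vars}\to\mathbb{N}$; a heap is a partial map $h$ from a finite set $\mathrm{dom}(h)\subseteq\mathbb{N}_{>0}$ to $\mathbb{N}$. $h_1\perp h_2$ means disjoint domains; then $h_1\star h_2$ is their union; $h_\emptyset$ is the empty heap. $\mathsf{States}$ is the set of pairs $(s,h)$. $s(e)$ is the value of a (heap-independent) arithmetic expression $e$ under $s$, $s\models\varphi$ means the Boolean expression $\varphi$ holds under $s$, $s[x\mapsto v]$ is the updated stack, $h[\ell\mapsto v]$ (for $\ell\in\mathrm{dom}(h)$) the updated heap. Programs are generated by $C ::= \mathtt{tick}(e) \mid x:=e \mid x:=\mathtt{alloc}(e) \mid \langle e\rangle:=e' \mid x:=\langle e\rangle \mid \mathtt{free}(e) \mid \{C\}[p]\{C\} \mid \mathtt{if}(\varphi)\{C\}\mathtt{else}\{C\} \mid C;C \mid \mathtt{while}(\varphi)\{C\}$, where $p$ is an expression with $s(p)\in[0,1]\cap\mathbb{Q}$ for all $s$. The statements other than tick, probabilistic choice, conditional, sequencing and loops are called atomic. Runtimes. $\mathbb{T}$ is the set of functions $\mathsf{States}\to[0,\infty]$,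 ordered pointwise by $\preceq$; arithmetic is pointwise with $0\cdot\infty=0$. $[\varphi]$ is the $0/1$-valued Iverson bracket of a Boolean expression. Truncated subtraction: $a\dot- b=\max(a-b,0)$, $\infty\dot- b=\infty$ for finite $b$, $a\dot-\infty=0$. Separating sum: $(f\oplus g)(s,h)=\min\{f(s,h_1)+g(s,h_2)\mid h=h_1\star h_2\}$. Separating monus: $(f \mathbin{-\!\!\ominus} g)(s,h)=\sup\{g(s,h\star h')\dot- f(s,h')\mid h'\perp h\}$. Quantifiers: $(\inf y\colon f)(s,h)=\inf_{v\in\mathbb{N}} f(s[y\mapsto v],h)$ and $(\sup y\colon f)(s,h)=\sup_{v\in\mathbb{N}}f(s[y\mapsto v],h)$. Substitution: $f[x/e](s,h)=f(s[x\mapsto s(e)],h)$. Atomic runtimes: $\mathsf{tm}(e)(s,h)=s(e)$ if $h=h_\emptyset$, else $\infty$; $[e\mapsto e'](s,h)=0$ if $\mathrm{dom}(h)=\{s(e)\}$ and $h(s(e))=s(e')$, else $\infty$; $[e\mapsto -](s,h)=0$ if $\mathrm{dom}(h)=\{s(e)\}$, else $\infty$; $\bigoplus_{i=1}^{e} f_i$ is evaluated at $(s,h)$ as the separating sum over $i=1,\dots,s(e)$ (the empty one being $[\mathsf{emp}]$, which is $0$ if $h=h_\emptyset$ and $\infty$ otherwise). Expected runtime transformer $\mathsf{ert}[\![C]\!]\colon\mathbb{T}\to\mathbb{T}$, by induction on $C$ (with $v$ a fresh variable): $\mathsf{ert}[\![\mathtt{tick}(e)]\!](f)=\mathsf{tm}(e)\oplus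 f$; $\mathsf{ert}[\![x:=e]\!](f)=f[x/e]$; $\mathsf{ert}[\![x:=\mathtt{alloc}(e)]\!](f)=\sup v\colon \big(\bigoplus_{i=1}^{e}[v+i-1\mapsto 0]\big)\mathbin{-\!\!\ominus} f[x/v]$; $\mathsf{ert}[\![\langle e\rangle:=e']\!](f)=[e\mapsto-]\oplus([e\mapsto e']\mathbin{-\!\!\ominus} f)$; $\mathsf{ert}[\![x:=\langle e\rangle]\!](f)=\inf v\colon [e\mapsto v]\oplus([e\mapsto v]\mathbin{-\!\!\ominus} f[x/v])$; $\mathsf{ert}[\![\mathtt{free}(e)]\!](f)=[e\mapsto-]\oplus f$; $\mathsf{ert}[\![C_1;C_2]\!](f)=\mathsf{ert}[\![C_1]\!](\mathsf{ert}[\![C_2]\!](f))$; $\mathsf{ert}[\![\mathtt{if}(\varphi)\{C_1\}\mathtt{else}\{C_2\}]\!](f)=[\varphi]\cdot\mathsf{ert}[\![C_1]\!](f)+[\neg\varphi]\cdot\mathsf{ert}[\![C_2]\!](f)$; $\mathsf{ert}[\![\{C_1\}[p]\{C_2\}]\!](f)=p\cdot\mathsf{ert}[\![C_1]\!](f)+(1-p)\cdot\mathsf{ert}[\![C_2]\!](f)$; $\mathsf{ert}[\![\mathtt{while}(\varphi)\{C\}]\!](f)=\mathrm{lfp}\, g.\ [\neg\varphi]\cdot f+[\varphi]\cdot\mathsf{ert}[\![C]\!](g)$ (least fixed point in $(\mathbb{T},\preceq)$). Amortized runtimes. A potential function is $\pi\colon\mathsf{States}\to\mathbb{R}_{\ge0}$.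 $\mathbb{A}_\pi=\{X\colon\mathsf{States}\to\mathbb{R}\cup\{\infty\}\mid -\pi\le X \text{ pointwise}\}$, ordered pointwise by $\preceq$ (a complete lattice with least element $-\pi$). The transformer $\mathsf{aert}_\pi[\![C]\!]\colon\mathbb{A}_\pi\to\mathbb{A}_\pi$ is defined by: $\mathsf{aert}_\pi[\![\mathtt{tick}(e)]\!](X)=e+X$; for atomic $C$ other than tick, $\mathsf{aert}_\pi[\![C]\!](X)=\mathsf{ert}[\![C]\!](X+\pi)-\pi$; $\mathsf{aert}_\pi[\![C_1;C_2]\!](X)=\mathsf{aert}_\pi[\![C_1]\!](\mathsf{aert}_\pi[\![C_2]\!](X))$; conditional: $[\varphi]\cdot\mathsf{aert}_\pi[\![C_1]\!](X)+[\neg\varphi]\cdot\mathsf{aert}_\pi[\![C_2]\!](X)$; probabilistic choice: $p\cdot\mathsf{aert}_\pi[\![C_1]\!](X)+(1-p)\cdot\mathsf{aert}_\pi[\![C_2]\!](X)$; $\mathsf{aert}_\pi[\![\mathtt{while}(\varphi)\{C'\}]\!](X)=\mathrm{lfp}\,Y.\ [\neg\varphi]\cdot X+[\varphi]\cdot\mathsf{aert}_\pi[\![C']\!](Y)$ (least fixed point in $(\mathbb{A}_\pi,\preceq)$). *)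

From HB Require Import structures.
From mathcomp Require Import all_boot all_order all_algebra.
From mathcomp Require Import finmap.
From mathcomp Require Import all_classical all_reals ereal.

Set Implicit Arguments.
Unset Strict Implicit.
Unset Printing Implicit Defensive.
Import Order.TTheory GRing.Theory Num.Theory.
Local Open Scope classical_set_scope.
Local Open Scope ring_scope.
Local Open Scope ereal_scope.

Definition stack (Vars : finType) := Vars -> nat.

Definition heap := {h : {fmap nat -> nat} | (0%N \notin domf h)}.

Definition state (Vars : finType) := (stack Vars * heap)%type.

Definition expr (Vars : finType) := stack Vars -> nat.
Definition bexpr (Vars : finType) := stack Vars -> bool.

Definition upd (Vars : finType) (s : stack Vars) (x : Vars) (v : nat) : stack Vars :=
  fun y => if y == x then v else s y.

Definition hdisj (h1 h2 : heap) : Prop := [disjoint domf (val h1) & domf (val h2)]%fset.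

Definition hsplit (h h1 h2 : heap) : Prop :=
  hdisj h1 h2 /\ val h = catf (val h1) (val h2).

Inductive prog (Vars : finType) : Type :=
| Tick (e : expr Vars)
| Assign (x : Vars) (e : expr Vars)
| Alloc (x : Vars) (e : expr Vars)
| Mutate (e e' : expr Vars)                  (* <e> := e' *)
| Lookup (x : Vars) (e : expr Vars)
| Free (e : expr Vars)
| Choice (C1 : prog Vars) (p : stack Vars -> rat)
         (hp : forall s, ((0 <= p s) && (p s <= 1))%R) (C2 : prog Vars)
| Ite (phi : bexpr Vars) (C1 C2 : prog Vars)
| Seq (C1 C2 : prog Vars)
| While (phi : bexpr Vars) (C : prog Vars).

Arguments Tick {Vars}. Arguments Assign {Vars}. Arguments Alloc {Vars}.
Arguments Mutate {Vars}. Arguments Lookup {Vars}. Arguments Free {Vars}.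
Arguments Choice {Vars}. Arguments Ite {Vars}. Arguments Seq {Vars}.
Arguments While {Vars}.

Definition rt (Vars : finType) (R : realType) := state Vars -> \bar R.

Definition iver (R : realType) (b : bool) : \bar R := (if b then 1 else 0)%:E.

Definition tsub (R : realType) (a b : \bar R) : \bar R :=
  if b == +oo then 0 else if a == +oo then +oo else maxe (a - b) 0.

Definition substf (Vars : finType) (R : realType) (f : rt Vars R) (x : Vars)
  (e : expr Vars) : rt Vars R :=
  fun st => f (upd st.1 x (e st.1), st.2).

Definition sepsum (Vars : finType) (R : realType) (f g : rt Vars R) : rt Vars R :=
  fun st => ereal_inf [set z | exists h1 h2 : heap,
      hsplit st.2 h1 h2 /\ z = f (st.1, h1) + g (st.1, h2)].

Definition sepmonus (Vars : finType) (R : realType) (f g : rt Vars R) : rt Vars R :=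
  fun st => ereal_sup [set z | exists h' hh : heap,
      hdisj st.2 h' /\ val hh = catf (val st.2) (val h') /\
      z = tsub (g (st.1, hh)) (f (st.1, h'))].

Definition emp_rt (Vars : finType) (R : realType) : rt Vars R :=
  fun st => if domf (val st.2) == fset0 then 0 else +oo.

Definition tm (Vars : finType) (R : realType) (e : expr Vars) : rt Vars R :=
  fun st => if domf (val st.2) == fset0 then ((e st.1)%:R)%:E else +oo.

Definition pts (Vars : finType) (R : realType) (e e' : expr Vars) : rt Vars R :=
  fun st => if (domf (val st.2) == [fset e st.1]%fset)
               && ((val st.2).[? e st.1]%fmap == Some (e' st.1))
            then 0 else +oo.

Definition pts_any (Vars : finType) (R : realType) (e : expr Vars) : rt Vars R :=
  fun st => if domf (val st.2) == [fset e st.1]%fset then 0 else +oo.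

Fixpoint bigsep_n (Vars : finType) (R : realType) (n : nat) (F : nat -> rt Vars R)
  : rt Vars R :=
  match n with
  | O => @emp_rt Vars R
  | S m => sepsum (bigsep_n m F) (F (S m))
  end.

Definition bigsep (Vars : finType) (R : realType) (e : expr Vars) (F : nat -> rt Vars R)
  : rt Vars R := fun st => bigsep_n (e st.1) F st.

(* least fixed point in (T, <=): T = States -> [0, oo]; Knaster-Tarski
   (meet of all pre-fixed points) *)
Definition lfpT (Vars : finType) (R : realType) (Phi : rt Vars R -> rt Vars R)
  : rt Vars R :=
  fun st => ereal_inf [set g st | g in
     [set g : rt Vars R | (forall st', 0 <= g st') /\ (forall st', Phi g st' <= g st')]].

(* least fixed point in (A_pi, <=): A_pi = {X : States -> R u {oo} | -pi <= X} *)
Definition lfpA (Vars : finType) (R : realType) (pi : state Vars -> R)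
  (Phi : rt Vars R -> rt Vars R) : rt Vars R :=
  fun st => ereal_inf [set g st | g in
     [set g : rt Vars R | (forall st', - (pi st')%:E <= g st') /\
                          (forall st', Phi g st' <= g st')]].

Arguments tsub {R}. Arguments substf {Vars R}. Arguments sepsum {Vars R}.
Arguments sepmonus {Vars R}. Arguments emp_rt {Vars R}. Arguments tm {Vars R}.
Arguments pts {Vars R}. Arguments pts_any {Vars R}. Arguments bigsep_n {Vars R}.
Arguments bigsep {Vars R}. Arguments lfpT {Vars R}. Arguments lfpA {Vars R}.

Fixpoint ert (Vars : finType) (R : realType) (C : prog Vars) (f : rt Vars R)
  : rt Vars R :=
  match C with
  | Tick e => sepsum (tm e) f
  | Assign x e => substf f x e
  | Alloc x e =>
      fun st => ereal_sup (range (fun v : nat =>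
        sepmonus (bigsep e (fun i => pts (fun _ => (v + i - 1)%N) (fun _ => 0%N)))
                 (substf f x (fun _ => v)) st))
  | Mutate e e' => sepsum (pts_any e) (sepmonus (pts e e') f)
  | Lookup x e =>
      fun st => ereal_inf (range (fun v : nat =>
        sepsum (pts e (fun _ => v))
               (sepmonus (pts e (fun _ => v)) (substf f x (fun _ => v))) st))
  | Free e => sepsum (pts_any e) f
  | Choice C1 p _ C2 =>
      fun st => (ratr (p st.1) : R)%:E * ert C1 f st
              + (1 - ratr (p st.1) : R)%:E * ert C2 f st
  | Ite phi C1 C2 =>
      fun st => iver R (phi st.1) * ert C1 f st + iver R (~~ phi st.1) * ert C2 f st
  | Seq C1 C2 => ert C1 (ert C2 f)
  | While phi C' =>
      lfpT (fun g st => iver R (~~ phi st.1) * f st + iver R (phi st.1) * ert C' g st)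
  end.

Fixpoint aert (Vars : finType) (R : realType) (pi : state Vars -> R) (C : prog Vars)
  (X : rt Vars R) : rt Vars R :=
  match C with
  | Tick e => fun st => ((e st.1)%:R)%:E + X st
  | Choice C1 p _ C2 =>
      fun st => (ratr (p st.1) : R)%:E * aert pi C1 X st
              + (1 - ratr (p st.1) : R)%:E * aert pi C2 X st
  | Ite phi C1 C2 =>
      fun st => iver R (phi st.1) * aert pi C1 X st
              + iver R (~~ phi st.1) * aert pi C2 X st
  | Seq C1 C2 => aert pi C1 (aert pi C2 X)
  | While phi C' =>
      lfpA pi (fun Y st => iver R (~~ phi st.1) * X st + iver R (phi st.1) * aert pi C' Y st)
  | (Assign _ _ | Alloc _ _ | Mutate _ _ | Lookup _ _ | Free _) as C0 =>
      fun st => ert C0 (fun st' => X st' + (pi st')%:E) st - (pi st)%:E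
  end.

From HB Require Import structures.
From mathcomp Require Import all_boot all_order all_algebra.
From mathcomp Require Import finmap.
From mathcomp Require Import all_classical all_reals ereal.
From mathcomp Require Import ring.

Set Implicit Arguments.
Unset Strict Implicit.
Unset Printing Implicit Defensive.
Import Order.TTheory GRing.Theory Num.Theory.
Local Open Scope ring_scope.
Local Open Scope ereal_scope.

(* The amortized transformer is the expected-runtime transformer conjugated by
   the shift [X |-> X + pi], which is an order isomorphism from [A_pi] onto the
   nonnegative runtimes with inverse [Y |-> Y - pi].  For [tick(e)] the potential cancels because
   [tm(e) (+) f = e + f]; for probabilistic choice and conditionals a convex
   combination commutes with subtracting [pi], provided the combined runtimes
   are not [-oo], which holds as [ert] maps nonnegative runtimes to nonnegative
   ones; for loops the shift maps the pre-fixed points of the amortized loop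
   functional onto those of the expected-runtime one, hence least fixed points
   onto least fixed points. *)

Lemma convex_sube (R : realType) (p c : R) (a b : \bar R) : 0 <= a -> 0 <= b ->
  p%:E * (a - c%:E) + (1 - p)%:E * (b - c%:E) = p%:E * a + (1 - p)%:E * b - c%:E.
Proof.
move=> a0 b0; rewrite !muleDr ?fin_num_adde_defl // -!EFinN -!EFinM.
by rewrite addeACA -EFinD; congr (_ + _%:E); ring.
Qed.

Lemma iver_sube (R : realType) (b : bool) (x y : \bar R) (c : R) :
  iver R b * (x - c%:E) + iver R (~~ b) * (y - c%:E) =
  iver R b * x + iver R (~~ b) * y - c%:E.
Proof. by case: b; rewrite /iver /= ?mul1e ?mul0e ?adde0 ?add0e. Qed.

Definition heap0 : heap := exist _ [fmap]%fmap isT.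

Section Runtimes.
Variables (Vars : finType) (R : realType).
Implicit Types (f g : rt Vars R) (st : state Vars).

Lemma tsub_ge0 (a b : \bar R) : 0 <= tsub a b.
Proof.
rewrite /tsub; case: ifP => // _; case: ifP => _; first exact: leey.
by rewrite le_max lexx orbT.
Qed.

Lemma sepmonus_ge0 f g st : 0 <= sepmonus f g st.
Proof.
apply: le_ereal_sup_tmp; exists (tsub (g st) (f (st.1, heap0))); last exact: tsub_ge0.
exists heap0, st.2; split; first exact: fdisjointX0.
by rewrite catf0 -surjective_pairing.
Qed.

Lemma sepsum_ge0 f g st :
  (forall st, 0 <= f st) -> (forall st, 0 <= g st) -> 0 <= sepsum f g st.
Proof. by move=> f0 g0; apply: le_ereal_inf_tmp => _ [h1 [h2 [_ ->]]]; exact: adde_ge0. Qed.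

Lemma iver_ge0 (b : bool) : 0 <= iver R b.
Proof. by case: b; rewrite lee_fin. Qed.

Lemma tm_ge0 e st : 0 <= @tm Vars R e st.
Proof. by rewrite /tm; case: ifP; rewrite ?lee_fin ?leey. Qed.

Lemma pts_ge0 e e' st : 0 <= @pts Vars R e e' st.
Proof. by rewrite /pts; case: ifP; rewrite ?leey. Qed.

Lemma pts_any_ge0 e st : 0 <= @pts_any Vars R e st.
Proof. by rewrite /pts_any; case: ifP; rewrite ?leey. Qed.

Lemma ert_ge0 (C : prog Vars) f : (forall st, 0 <= f st) -> forall st, 0 <= ert C f st.
Proof.
elim: C f => [e|x e|x e|e e'|x e|e|C1 IH1 p hp C2 IH2|phi C1 IH1 C2 IH2|C1 IH1 C2 IH2|phi C IH]
  f f0 st /=.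
- exact: sepsum_ge0 (tm_ge0 e) f0.
- exact: f0.
- apply: le_ereal_sup_tmp; exists (sepmonus (bigsep e (fun i => pts (fun _ => (i - 1)%N) (fun _ => 0%N)))
    (substf f x (fun _ => 0%N)) st); [by exists 0%N|exact: sepmonus_ge0].
- exact: sepsum_ge0 (pts_any_ge0 e) (sepmonus_ge0 _ _).
- apply: le_ereal_inf_tmp => _ [v _ <-].
  exact: sepsum_ge0 (pts_ge0 e _) (sepmonus_ge0 _ _).
- exact: sepsum_ge0 (pts_any_ge0 e) f0.
- have /andP[p0 p1] := hp st.1.
  apply: adde_ge0; apply: mule_ge0; rewrite ?IH1 ?IH2 // lee_fin.
    by rewrite ler0q.
  by rewrite subr_ge0 -(rmorph1 (@ratr R)) ler_rat.
- by apply: adde_ge0; apply: mule_ge0; rewrite ?iver_ge0 ?IH1 ?IH2.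
- exact/IH1/IH2.
- by apply: le_ereal_inf_tmp => _ [g [g0 _] <-].
Qed.

(* Only the split that puts the empty heap on the left is finite. *)
Lemma sepsum_tm e f st :
  (forall st, 0 <= f st) -> sepsum (tm e) f st = ((e st.1)%:R)%:E + f st.
Proof.
case: st => s h f0; apply/le_anti/andP; split.
  apply: ereal_inf_lbound; exists heap0, h; split.
    by split; [exact: fdisjoint0X|rewrite /= cat0f].
  by rewrite /tm domf0 eqxx.
apply: le_ereal_inf_tmp => _ [h1 [h2 [[_ hv] ->]]].
rewrite /tm /=; case: ifP => [/eqP/fmap_nil h10|_].
  by move: hv; rewrite /= h10 cat0f => /val_inj ->.
by rewrite addye ?leey // gt_eqF // (lt_le_trans _ (f0 _)) ?ltNy0.
Qed.

Variable pi : state Vars -> R.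

Definition addpot (X : rt Vars R) : rt Vars R := fun st => X st + (pi st)%:E.
Definition subpot (Y : rt Vars R) : rt Vars R := fun st => Y st - (pi st)%:E.

Lemma subpotK : cancel subpot addpot.
Proof. by move=> Y; apply: funext => st; rewrite /subpot /addpot subeK. Qed.

Lemma addpot_ge0 X : (forall st, - (pi st)%:E <= X st) -> forall st, 0 <= addpot X st.
Proof. by move=> X_ge st; rewrite -leeBlDr // sub0e. Qed.

Lemma subpot_ge Y : (forall st, 0 <= Y st) -> forall st, - (pi st)%:E <= subpot Y st.
Proof. by move=> Y0 st; rewrite -[leLHS]sub0e leeD2r. Qed.

Lemma ert_addpot_ge0 (C : prog Vars) X :
  (forall st, - (pi st)%:E <= X st) -> forall st, 0 <= ert C (addpot X) st.
Proof. by move=> /addpot_ge0; exact: ert_ge0. Qed.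

Lemma lfpA_conjugate (PhiA PhiT : rt Vars R -> rt Vars R) :
  (forall Y, (forall st, - (pi st)%:E <= Y st) -> PhiA Y = subpot (PhiT (addpot Y))) ->
  lfpA pi PhiA = subpot (lfpT PhiT).
Proof.
move=> PhiAE; apply: funext => st; apply/le_anti/andP; split.
  rewrite /subpot leeBrDr //; apply: le_ereal_inf_tmp => _ [g [g0 g_pre] <-].
  rewrite -leeBrDr //; apply: ereal_inf_lbound.
  exists (subpot g) => //; split; first exact: subpot_ge.
  by move=> st'; rewrite PhiAE ?subpotK; [exact: leeD2r|exact: subpot_ge].
apply: le_ereal_inf_tmp => _ [Y [Y_ge Y_pre] <-].
rewrite leeBlDr //; apply: ereal_inf_lbound.
exists (addpot Y) => //; split; first exact: addpot_ge0.
by move=> st'; rewrite -leeBlDr // -[leLHS]/(subpot _ st') -PhiAE.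
Qed.

Lemma aert_conjugate (C : prog Vars) X :
  (forall st, - (pi st)%:E <= X st) -> aert pi C X = subpot (ert C (addpot X)).
Proof.
elim: C X => [e|x e|x e|e e'|x e|e|C1 IH1 p hp C2 IH2|phi C1 IH1 C2 IH2|C1 IH1 C2 IH2|phi C IH]
  X hX //=.
- apply: funext => st; rewrite /subpot sepsum_tm ?addeA ?addeK //; exact: addpot_ge0.
- apply: funext => st; rewrite IH1 // IH2 //.
  by apply: convex_sube; exact: ert_addpot_ge0.
- by apply: funext => st; rewrite IH1 // IH2 //; exact: iver_sube.
- by rewrite IH2 // IH1 ?subpotK //; exact/subpot_ge/ert_addpot_ge0.
- apply: lfpA_conjugate => Y hY; apply: funext => st.
  rewrite IH // -[X st in LHS](@addeK _ (pi st)%:E) //.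
  by rewrite [LHS]addeC iver_sube [X in X - _]addeC.
Qed.

End Runtimes.

Theorem mainTheorem1 (Vars : finType) (R : realType) (pi : state Vars -> R)
  (hpi : forall st, (0 <= pi st)%R) (C : prog Vars) (X : rt Vars R)
  (hX : forall st, - (pi st)%:E <= X st) :
  aert pi C X = (fun st => ert C (fun st' => X st' + (pi st')%:E) st - (pi st)%:E).
Proof. exact: aert_conjugate. Qed.
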